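(* Consider the ODE system $$\frac{du}{dt}=\frac{a_1u}{1+fv}-b_1u^2-c_1uv,\qquad \frac{dv}{dt}=a_2v-b_2v^2-c_2uv,$$ with positive parameters $a_1,a_2,b_1,b_2,c_1,c_2$ and $f\ge0$. The boundary equilibrium $E_3=(0,\frac{a_2}{b_2})$ is locally stable (both eigenvalues of the Jacobian at $E_3$ are negative) if and only if $$f>\frac{a_1b_2^2-a_2b_2c_1}{a_2^2c_1}.$$ *)

From HB Require Import structures.
From mathcomp Require Import all_boot all_order all_algebra.
From mathcomp Require Import all_classical all_reals all_analysis.
Set Implicit Arguments. Unset Strict Implicit. Unset Printing Implicit Defensive.
Import Order.TTheory GRing.Theory Num.Theory.
Local Open Scope ring_scope.

Definition rhs_u {R : realType} (a1 b1 c1 f : R) (u v : R) : R :=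
  a1 * u / (1 + f * v) - b1 * u ^+ 2 - c1 * u * v.
Definition rhs_v {R : realType} (a2 b2 c2 : R) (u v : R) : R :=
  a2 * v - b2 * v ^+ 2 - c2 * u * v.

Definition pd_u {R : realType} (F : R -> R -> R) (u v : R) : R :=
  derive1 (fun x => F x v) u.
Definition pd_v {R : realType} (F : R -> R -> R) (u v : R) : R :=
  derive1 (fun y => F u y) v.

Definition jacobian2 {R : realType} (F G : R -> R -> R) (u v : R) : 'M[R]_2 :=
  \matrix_(i < 2, j < 2)
    if (i == 0 :> nat) then (if (j == 0 :> nat) then pd_u F u v else pd_v F u v)
    else (if (j == 0 :> nat) then pd_u G u v else pd_v G u v).

Definition both_eigenvalues_negative {R : realType} (J : 'M[R]_2) : Prop :=
  exists l1 l2 : R, l1 < 0 /\ l2 < 0 /\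
    char_poly J = ('X - l1%:P) * ('X - l2%:P).

From HB Require Import structures.
From mathcomp Require Import all_boot all_order all_algebra.
From mathcomp Require Import all_classical all_reals all_analysis.
From mathcomp Require Import ring lra.
Import Order.TTheory GRing.Theory Num.Theory.
Local Open Scope ring_scope.

(* On the axis u = 0 the u-equation vanishes identically in v, so the
   Jacobian at E3 = (0, a2/b2) is lower triangular; its eigenvalues are the
   diagonal entries -a2 < 0 and a1/(1 + f a2/b2) - c1 a2/b2, and the latter
   is negative exactly when f exceeds the threshold. *)

Lemma char_poly2_lower_trig (R : comNzRingType) (J : 'M[R]_2) :
  J 0 1 = 0 -> char_poly J = ('X - (J 0 0)%:P) * ('X - (J 1 1)%:P).
Proof.
move=> J01; rewrite char_poly_trig.
  by rewrite !big_ord_recl big_ord0 mulr1; congr (_ * ('X - (J _ _)%:P)); exact: val_inj.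
apply/is_trig_mxP => -[[|[|i]] Hi] -[[|[|j]] Hj] //= _.
by rewrite -J01; congr (J _ _); exact: val_inj.
Qed.

Section AxisJacobian.
Context {R : realType}.

Lemma both_eigenvalues_negative_factor {J : 'M[R]_2} {l1 l2 : R} :
  char_poly J = ('X - l1%:P) * ('X - l2%:P) ->
  both_eigenvalues_negative J <-> l1 < 0 /\ l2 < 0.
Proof.
move=> hJ; split; last by move=> [h1 h2]; exists l1, l2.
move=> [m1 [m2 [hm1 [hm2 hm]]]].
have root_neg x : (char_poly J).[x] = 0 -> x < 0.
  rewrite hm !hornerE => /eqP; rewrite mulf_eq0 !subr_eq0.
  by case/orP => /eqP ->.
by split; apply: root_neg; rewrite hJ !hornerE subrr ?(mul0r, mulr0).
Qed.

Lemma pd_u_rhs_u_axis (a1 b1 c1 f v : R) :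
  pd_u (rhs_u a1 b1 c1 f) 0 v = a1 / (1 + f * v) - c1 * v.
Proof.
rewrite /pd_u /rhs_u derive1E derive_val /GRing.scale /=.
rewrite !(mulr0, mul0r, add0r, addr0, sub0r, subr0, mulr1); ring.
Qed.

Lemma pd_v_rhs_u_axis (a1 b1 c1 f v : R) :
  pd_v (rhs_u a1 b1 c1 f) 0 v = 0.
Proof.
rewrite /pd_v /rhs_u derive1E.
have -> : (fun y : R => a1 * 0 / (1 + f * y) - b1 * 0 ^+ 2 - c1 * 0 * y) = cst 0.
  by apply/funext => y; rewrite !(mulr0, mul0r, expr0n, subr0).
by rewrite derive_val.
Qed.

Lemma pd_v_rhs_v_axis (a2 b2 c2 v : R) :
  pd_v (rhs_v a2 b2 c2) 0 v = a2 - 2 * b2 * v.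
Proof.
rewrite /pd_v /rhs_v derive1E derive_val /GRing.scale /=.
rewrite !(mulr0, mul0r, add0r, addr0, sub0r, subr0, mulr1); ring.
Qed.

Lemma char_poly_jacobian_axis (a1 a2 b1 b2 c1 c2 f v : R) :
  char_poly (jacobian2 (rhs_u a1 b1 c1 f) (rhs_v a2 b2 c2) 0 v) =
  ('X - (a1 / (1 + f * v) - c1 * v)%:P) * ('X - (a2 - 2 * b2 * v)%:P).
Proof.
rewrite char_poly2_lower_trig !mxE /= ?pd_v_rhs_u_axis //.
by rewrite pd_u_rhs_u_axis pd_v_rhs_v_axis.
Qed.

End AxisJacobian.

Lemma E3_u_eigenvalue_lt0 {R : realFieldType} (a1 : R) {a2 b2 c1 f : R} :
  0 < a2 -> 0 < b2 -> 0 < c1 -> 0 <= f ->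
  a1 / (1 + f * (a2 / b2)) - c1 * (a2 / b2) < 0 <->
  (a1 * b2 ^+ 2 - a2 * b2 * c1) / (a2 ^+ 2 * c1) < f.
Proof.
move=> ha2 hb2 hc1 hf; set v := a2 / b2.
have hv : 0 < v by rewrite divr_gt0.
have hd : 0 < 1 + f * v by rewrite ltr_wpDr // mulr_ge0 // ltW.
rewrite ltr_pdivrMr ?mulr_gt0 ?exprn_gt0 // subr_lt0 ltr_pdivrMr //.
rewrite -(ltr_pM2r (exprn_gt0 2 hb2)).
have -> : c1 * v * (1 + f * v) * b2 ^+ 2 = c1 * a2 * b2 + f * (a2 ^+ 2 * c1).
  by rewrite /v; field; rewrite gt_eqF.
by split => ?; lra.
Qed.

Theorem mainTheorem8 (R : realType) (a1 a2 b1 b2 c1 c2 f : R)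
  (ha1 : 0 < a1) (ha2 : 0 < a2) (hb1 : 0 < b1) (hb2 : 0 < b2)
  (hc1 : 0 < c1) (hc2 : 0 < c2) (hf : 0 <= f) :
  both_eigenvalues_negative
    (jacobian2 (rhs_u a1 b1 c1 f) (rhs_v a2 b2 c2) 0 (a2 / b2))
  <-> (a1 * b2 ^+ 2 - a2 * b2 * c1) / (a2 ^+ 2 * c1) < f.
Proof.
have hJ := char_poly_jacobian_axis a1 a2 b1 b2 c1 c2 f (a2 / b2).
have E3_v_eigenvalue : a2 - 2 * b2 * (a2 / b2) = - a2 by field; rewrite gt_eqF.
rewrite E3_v_eigenvalue in hJ.
have hA := E3_u_eigenvalue_lt0 a1 ha2 hb2 hc1 hf.
split => [/(both_eigenvalues_negative_factor hJ) [/hA] //|/hA hneg].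
by apply/(both_eigenvalues_negative_factor hJ); rewrite oppr_lt0.
Qed.
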